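(* For every integer $N\ge 0$, let $T(N)$ be the number of tilings of a $2\times 3\times N$ box by $N$ bricks of size $1\times 2\times 3$. Then, as formal power series, \[ \sum_{N\ge 0} T(N)\,z^N=\frac{1}{1-z-z^2-3z^3}. \]
   Context: A tiling of a $k\times m\times n$ box (made of $kmn$ unit cubes) by $a\times b\times c$ bricks is a partition of the box into non-overlapping axis-parallel boxes with integer corner coordinates, each congruent (by an axis-permuting placement) to the $a\times b\times c$ brick; all orientations are allowed. Tilings related by symmetries of the box are counted as distinct. The empty tiling counts once for $N=0$. *)

From mathcomp Require Import all_boot all_order all_algebra.
Set Implicit Arguments. Unset Strict Implicit. Unset Printing Implicit Defensive.

(* Unit cubes of the 2 x 3 x N box: cube (i,j,k) occupies [i,i+1]x[j,j+1]x[k,k+1]. *)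
Definition cell (N : nat) : finType := ('I_2 * 'I_3 * 'I_N)%type.

Definition boxset (N : nat) (c : cell N) (d : seq nat) : {set cell N} :=
  [set p : cell N |
     [&& (c.1.1 <= p.1.1 < c.1.1 + nth 0 d 0)%N,
         (c.1.2 <= p.1.2 < c.1.2 + nth 0 d 1)%N &
         (c.2 <= p.2 < c.2 + nth 0 d 2)%N]].

Definition is_brick (N : nat) (B : {set cell N}) : bool :=
  [exists c : cell N,
    has (fun d : seq nat =>
           [&& (c.1.1 + nth 0 d 0 <= 2)%N, (c.1.2 + nth 0 d 1 <= 3)%N,
               (c.2 + nth 0 d 2 <= N)%N & B == boxset c d])
        (permutations [:: 1; 2; 3]%N)].

Definition is_tiling (N : nat) (P : {set {set cell N}}) : bool :=
  partition P [set: cell N] && [forall B in P, is_brick B].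

Definition T (N : nat) : nat := #|[set P : {set {set cell N}} | is_tiling P]|.

Definition denom_coef (i : nat) : int := nth 0%R [:: 1; -1; -1; -3]%R i.

From mathcomp Require Import all_boot all_order all_algebra zify.
Set Implicit Arguments. Unset Strict Implicit. Unset Printing Implicit Defensive.

(* The bricks meeting the bottom face z = 0 cut that 2 x 3 face into their
   footprints, and a footprint determines the height of its brick.  An exhaustive
   search over the ten possible footprints shows that exactly five configurations
   occur: one 2x3x1 brick, two 1x3x2 bricks, or one of the three domino tilings of
   the face by bricks of height 3.  Each fills the first k slices (k = 1, 2, 3)
   exactly, and translating the remaining bricks down by k is a bijection onto the
   tilings of the 2 x 3 x (N - k) box.  Hence T(N) = T(N-1) + T(N-2) + 3 T(N-3)
   with T(0) = 1, which is the identity (1 - z - z^2 - 3 z^3) \sum T(N) z^N = 1. *)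

(* [boxset] with a corner given by natural numbers, not necessarily inside the box. *)
Definition box M (a b z : nat) (d : seq nat) : {set cell M} :=
  [set p : cell M | [&& a <= p.1.1 < a + nth 0 d 0,
                        b <= p.1.2 < b + nth 0 d 1 &
                        z <= p.2 < z + nth 0 d 2]].

Definition brick_dims := permutations [:: 1; 2; 3].

Lemma brick_dims_gt0 d :
  d \in brick_dims -> [&& 0 < nth 0 d 0, 0 < nth 0 d 1 & 0 < nth 0 d 2].
Proof. by move: d; apply/allP. Qed.

Definition box_fits M a b z d :=
  [&& d \in brick_dims, a + nth 0 d 0 <= 2, b + nth 0 d 1 <= 3 & z + nth 0 d 2 <= M].

Lemma box_corner M a b z d : box_fits M a b z d ->
  exists p : cell M,
    [/\ p \in box M a b z d, p.1.1 = a :> nat, p.1.2 = b :> nat & p.2 = z :> nat].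
Proof.
case/and4P=> /brick_dims_gt0 /and3P [d0 d1 d2] ha hb hz.
have ha' : a < 2 by lia.
have hb' : b < 3 by lia.
have hz' : z < M by lia.
exists (Ordinal ha', Ordinal hb', Ordinal hz'); split => //.
by rewrite inE /= !leqnn /=; lia.
Qed.

Lemma is_brickP M (B : {set cell M}) :
  reflect (exists a b z d, box_fits M a b z d /\ B = box M a b z d) (is_brick B).
Proof.
apply: (iffP existsP) => [[c /hasP [d hd /and4P [ha hb hz /eqP ->]]]|].
  by exists c.1.1, c.1.2, c.2, d; rewrite /box_fits hd ha hb hz.
move=> [a [b [z [d [fits ->]]]]].
have [c [_ ea eb ez]] := box_corner fits.
case/and4P: fits => hd ha hb hz.
exists c; apply/hasP; exists d => //.
by rewrite /boxset ea eb ez ha hb hz eqxx.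
Qed.

Lemma tilingP M (P : {set {set cell M}}) :
  is_tiling P <-> [/\ forall B, B \in P -> is_brick B,
                      forall x, exists2 B, B \in P & x \in B &
                      forall B B' x, B \in P -> B' \in P -> x \in B -> x \in B' -> B = B'].
Proof.
split.
  case/andP=> /and3P [/eqP cover_P triv_P _] /forallP brick_P; split.
  - by move=> B PB; have := brick_P B; rewrite PB.
  - move=> x; have /bigcupP[B PB xB] : x \in cover P by rewrite cover_P inE.
    by exists B.
  - move=> B B' x PB PB' xB xB'; apply/eqP/negPn/negP => neqBB'.
    by have := disjointFr (trivIsetP triv_P B B' PB PB' neqBB') xB; rewrite xB'.
case=> brick_P cover_P disj_P; apply/andP; split; last first.
  by apply/forallP=> B; apply/implyP/brick_P.
apply/and3P; split.
- apply/eqP/setP=> x; rewrite inE; apply/bigcupP; exact: cover_P.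
- apply/trivIsetP=> B B' PB PB' neqBB'; apply/pred0P=> x /=.
  apply/negbTE/andP=> -[xB xB']; apply: (negP neqBB'); apply/eqP.
  exact: disj_P PB PB' xB xB'.
- apply/negP=> P0; case/is_brickP: (brick_P _ P0) => a [b [z [d [fits e]]]].
  by have [p [+ _ _ _]] := box_corner fits; rewrite -e inE.
Qed.

Section Shift.
Variables (k M : nat).

Lemma shift_subproof (z : 'I_(M - k)) : k + z < M.
Proof. by rewrite -ltn_subRL. Qed.

Definition shift (p : cell (M - k)) : cell M := (p.1, Ordinal (shift_subproof p.2)).

Lemma shift_inj : injective shift.
Proof.
move=> [u z] [u' z'] [-> e]; congr (_, _).
by apply: val_inj; move: e => /addnI.
Qed.

Lemma shift_onto (p : cell M) : k <= p.2 -> exists q, shift q = p.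
Proof.
case: p => u z /= kz; have z_lt : z - k < M - k by have := ltn_ord z; lia.
by exists (u, Ordinal z_lt); congr (_, _); apply: val_inj => /=; lia.
Qed.

Lemma shift_box a b z d : shift @: box (M - k) a b z d = box M a b (k + z) d.
Proof.
apply/setP=> p; rewrite inE; apply/imsetP/idP.
  case=> q + ->; rewrite inE /= => /and3P [-> -> hz] /=; lia.
case/and3P=> ha hb hz; have [|q eq] := @shift_onto p; first by lia.
by exists q => //; move: ha hb hz; rewrite -eq inE /= => -> -> /=; lia.
Qed.

Lemma shift_above (q : cell (M - k)) : k <= (shift q).2.
Proof. exact: leq_addr. Qed.

Lemma is_brick_shift B : is_brick B -> is_brick (shift @: B).
Proof.
case/is_brickP=> a [b [z [d [/and4P [hd ha hb hz] ->]]]].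
rewrite shift_box; apply/is_brickP; exists a, b, (k + z), d; split => //.
have /and3P [_ _ d2_gt0] := brick_dims_gt0 hd.
by rewrite /box_fits hd ha hb; lia.
Qed.

Lemma is_brick_unshift (B : {set cell M}) :
  is_brick B -> {in B, forall x : cell M, k <= x.2} ->
  exists2 B', is_brick B' & B = shift @: B'.
Proof.
case/is_brickP=> a [b [z [d [fits ->]]]] above.
have [c [cB _ _ cz]] := box_corner fits.
have := above c cB; rewrite cz => kz.
exists (box (M - k) a b (z - k) d); last by rewrite shift_box subnKC.
apply/is_brickP; exists a, b, (z - k), d; split => //.
by case/and4P: fits => hd ha hb hz; rewrite /box_fits hd ha hb; lia.
Qed.

End Shift.

Section FixedPrefix.
Variables (M k : nat) (C : {set {set cell M}}).
Hypothesis C_brick : forall B, B \in C -> is_brick B.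
Hypothesis C_below : forall B x, B \in C -> x \in B -> x.2 < k.
Hypothesis C_cover : forall x : cell M, x.2 < k -> exists2 B, B \in C & x \in B.
Hypothesis C_disjoint :
  forall B B' x, B \in C -> B' \in C -> x \in B -> x \in B' -> B = B'.

Local Notation shift := (@shift k M).

Definition extend (Q : {set {set cell (M - k)}}) : {set {set cell M}} :=
  C :|: [set shift @: (B : {set cell (M - k)}) | B in Q].

Lemma shift_notin_prefix (B : {set cell (M - k)}) : shift @: B \notin C.
Proof.
apply/negP=> CB; case/is_brickP: (C_brick CB) => a [b [z [d [fits e]]]].
have [p [+ _ _ _]] := box_corner fits; rewrite -e => /imsetP [q qB _].
by have := C_below CB (imset_f shift qB); rewrite ltnNge shift_above.
Qed.

Lemma extend_tiling Q : is_tiling Q -> is_tiling (extend Q).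
Proof.
case/tilingP=> brick_Q cover_Q disj_Q; apply/tilingP; split.
- move=> B; rewrite inE => /orP [/C_brick //|/imsetP [B' QB' ->]].
  exact/is_brick_shift/brick_Q.
- move=> x; have [/C_cover [B CB xB]|kx] := ltnP x.2 k.
    by exists B; rewrite // inE CB.
  have [q <-] := shift_onto kx; have [B' QB' qB'] := cover_Q q.
  by exists (shift @: B'); rewrite ?inE ?imset_f ?orbT.
- have below_shift B' x : x \in shift @: B' -> x.2 < k -> False.
    by case/imsetP=> q _ ->; rewrite ltnNge shift_above.
  move=> B1 B2 x; rewrite !inE.
  case/orP=> [CB1|/imsetP [B1' QB1' ->]]; case/orP=> [CB2|/imsetP [B2' QB2' ->]].
  + exact: C_disjoint.
  + by move=> /(C_below CB1) xk /below_shift /(_ xk).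
  + by move=> /below_shift + /(C_below CB2) => /[apply].
  + move=> /imsetP [q1 q1B1 ->] /imsetP [q2 q2B2 /shift_inj eq].
    by rewrite (disj_Q _ _ q1 QB1' QB2' q1B1) // eq.
Qed.

Lemma mem_shift_extend Q (B' : {set cell (M - k)}) :
  (shift @: B' \in extend Q) = (B' \in Q).
Proof.
by rewrite inE (negbTE (shift_notin_prefix B')) (mem_imset _ _ (imset_inj (@shift_inj k M))).
Qed.

Lemma extend_inj : injective extend.
Proof. by move=> Q1 Q2 eQ; apply/setP=> B'; rewrite -!mem_shift_extend eQ. Qed.

Lemma extend_onto P : is_tiling P -> C \subset P -> exists2 Q, is_tiling Q & P = extend Q.
Proof.
move=> tP CP; case/tilingP: (tP) => brick_P cover_P disj_P.
have above B : B \in P -> B \notin C -> {in B, forall x : cell M, k <= x.2}.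
  move=> PB notCB x xB; rewrite leqNgt; apply/negP=> /C_cover [B'' CB'' xB''].
  by move: notCB; rewrite (disj_P _ _ _ PB (subsetP CP _ CB'') xB xB'') CB''.
have unshift B : B \in P -> B \notin C -> exists2 B', is_brick B' & B = shift @: B'.
  by move=> PB notCB; exact: is_brick_unshift (brick_P _ PB) (above _ PB notCB).
exists [set B' : {set cell (M - k)} | shift @: B' \in P].
  apply/tilingP; split.
  - move=> B'; rewrite inE => PB'.
    have [B'' brickB'' /imset_inj eq] := unshift _ PB' (shift_notin_prefix B').
    by rewrite (eq (@shift_inj k M)).
  - move=> q; have [B PB qB] := cover_P (shift q).
    have notCB : B \notin C.
      by apply/negP=> CB; have := C_below CB qB; rewrite ltnNge shift_above.
    have [B' _ eB] := unshift _ PB notCB; exists B'; first by rewrite inE -eB.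
    by move: qB; rewrite eB (mem_imset _ _ (@shift_inj k M)).
  - move=> B1 B2 q; rewrite !inE => PB1 PB2 qB1 qB2.
    apply: (imset_inj (@shift_inj k M)).
    by apply: (disj_P _ _ (shift q) PB1 PB2); exact: imset_f.
apply/setP=> B; apply/idP/idP => [PB|].
  have [CB|notCB] := boolP (B \in C); first by rewrite inE CB.
  have [B' _ eB] := unshift _ PB notCB.
  by rewrite inE eB imset_f ?orbT // inE -eB.
by rewrite inE => /orP [/(subsetP CP) //|/imsetP [B' + ->]]; rewrite inE.
Qed.

Lemma card_tilings_with_prefix : #|[set P | is_tiling P & C \subset P]| = T (M - k).
Proof.
rewrite /T -(card_in_imset (f := extend)) => [|Q1 Q2 _ _]; last exact: extend_inj.
apply: eq_card => P; rewrite inE; apply/andP/imsetP => [[tP CP]|[Q + ->]].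
  by have [Q tQ ->] := extend_onto tP CP; exists Q; rewrite ?inE.
by rewrite inE => tQ; split; [exact: extend_tiling | exact: subsetUl].
Qed.

End FixedPrefix.

(* A brick resting on the bottom face z = 0: the corner of its footprint in the
   2 x 3 face, and its dimensions. *)
Definition placement := ((nat * nat) * seq nat)%type.

Definition depth (t : placement) := nth 0 t.2 2.

Definition slab M (t : placement) : {set cell M} := box M t.1.1 t.1.2 0 t.2.

Definition covers (t : placement) (u : nat * nat) :=
  (t.1.1 <= u.1 < t.1.1 + nth 0 t.2 0) && (t.1.2 <= u.2 < t.1.2 + nth 0 t.2 1).

Lemma mem_slab M t (x : cell M) :
  (x \in slab M t) = covers t (val x.1.1, val x.1.2) && (x.2 < depth t).
Proof. by rewrite inE andbA. Qed.

Definition squares : seq (nat * nat) := [seq (a, b) | a <- iota 0 2, b <- iota 0 3].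

Lemma mem_squares a b : ((a, b) \in squares) = (a < 2) && (b < 3).
Proof.
apply/allpairsP/andP => [[[a' b'] [ha hb [-> ->]]]|[a2 b3]].
  by move: ha hb; rewrite !mem_iota /=; lia.
by exists (a, b); rewrite !mem_iota; split => //; lia.
Qed.

Lemma all_squaresP (p : pred (nat * nat)) :
  reflect (forall u : 'I_2 * 'I_3, p (val u.1, val u.2)) (all p squares).
Proof.
apply: (iffP allP) => [p_sq [a b]|p_I [a b]].
  by apply: p_sq; rewrite mem_squares !ltn_ord.
by rewrite mem_squares => /andP [a2 b3]; exact: (p_I (Ordinal a2, Ordinal b3)).
Qed.

Definition placements : seq placement :=
  [seq t <- [seq (u, d) | u <- squares, d <- brick_dims]
     | (t.1.1 + nth 0 t.2 0 <= 2) && (t.1.2 + nth 0 t.2 1 <= 3)].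

Lemma mem_placements t : (t \in placements) =
  [&& t.2 \in brick_dims, t.1.1 + nth 0 t.2 0 <= 2 & t.1.2 + nth 0 t.2 1 <= 3].
Proof.
case: t => [[a b] d]; rewrite mem_filter andbC.
apply/andP/and3P => [[mem_t /andP [ha hb]]|[hd ha hb]].
  by case/allpairsP: mem_t => -[u d'] [_ hd [_ ed]]; subst d'.
split; rewrite ?ha ?hb //; apply/allpairsP; exists ((a, b), d); split => //.
have /and3P [d0 d1 _] := brick_dims_gt0 hd.
by rewrite mem_squares; move: ha hb d0 d1 => /=; lia.
Qed.

Lemma count_eq1_eq (X : eqType) (p : pred X) s x y :
  count p s = 1 -> x \in s -> y \in s -> p x -> p y -> x = y.
Proof.
rewrite -size_filter => size1 xs ys px py.
have : x \in filter p s by rewrite mem_filter px xs.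
have : y \in filter p s by rewrite mem_filter py ys.
by case: (filter p s) size1 => [|w []] // _; rewrite !inE => /eqP -> /eqP ->.
Qed.

Definition filling k (L : seq placement) :=
  all (fun t => (t \in placements) && (depth t == k)) L &&
  all (fun u => count (covers^~ u) L == 1) squares.

Definition slabs M (L : seq placement) : {set {set cell M}} :=
  [set B | B \in map (slab M) L].

Definition begins_with M k L (P : {set {set cell M}}) :=
  (k <= M) && all (fun t => slab M t \in P) L.

Section Filling.
Variables (M k : nat) (L : seq placement).
Hypotheses (fillL : filling k L) (k_le_M : k <= M).

Lemma filling_placement t : t \in L -> (t \in placements) && (depth t == k).
Proof. by case/andP: fillL => /allP fill_t _ /fill_t. Qed.

Lemma filling_count1 (x : cell M) : count (covers^~ (val x.1.1, val x.1.2)) L = 1.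
Proof. by case/andP: fillL => _ /all_squaresP /(_ x.1) /= /eqP. Qed.

Lemma mem_filling_slab t (x : cell M) :
  t \in L -> (x \in slab M t) = covers t (val x.1.1, val x.1.2) && (x.2 < k).
Proof. by move=> /filling_placement /andP [_ /eqP <-]; rewrite mem_slab. Qed.

Lemma slabsP B : reflect (exists2 t, t \in L & B = slab M t) (B \in slabs M L).
Proof. by rewrite inE; apply: (iffP mapP). Qed.

Lemma slabs_brick B : B \in slabs M L -> is_brick B.
Proof.
case/slabsP=> t /filling_placement /andP [+ /eqP dt] ->.
rewrite mem_placements => /and3P [hd ha hb].
apply/is_brickP; exists t.1.1, t.1.2, 0, t.2.
by rewrite /box_fits hd ha hb /= -/(depth t) dt.
Qed.

Lemma slabs_below B x : B \in slabs M L -> x \in B -> x.2 < k.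
Proof. by case/slabsP=> t Lt ->; rewrite mem_filling_slab // => /andP []. Qed.

Lemma slabs_cover (x : cell M) : x.2 < k -> exists2 B, B \in slabs M L & x \in B.
Proof.
move=> xk; have /hasP [t Lt cov] : has (covers^~ (val x.1.1, val x.1.2)) L.
  by rewrite has_count filling_count1.
by exists (slab M t); [apply/slabsP; exists t | rewrite mem_filling_slab // cov].
Qed.

Lemma slabs_disjoint B B' x :
  B \in slabs M L -> B' \in slabs M L -> x \in B -> x \in B' -> B = B'.
Proof.
case/slabsP=> t Lt ->; case/slabsP=> t' Lt' ->.
rewrite !mem_filling_slab // => /andP [cov _] /andP [cov' _].
by rewrite (count_eq1_eq (filling_count1 x) Lt Lt' cov cov').
Qed.

Lemma begins_with_slabs P : begins_with k L P = (slabs M L \subset P).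
Proof.
rewrite /begins_with k_le_M; apply/allP/subsetP => [sub B /slabsP [t Lt ->]|sub t Lt].
  exact: sub.
by apply: sub; apply/slabsP; exists t.
Qed.

End Filling.

(* The coefficient of z^N in z^i * \sum_n f(n) z^n; the test guards against the
   truncated subtraction N - i. *)
Definition lag (f : nat -> nat) (N i : nat) := if i <= N then f (N - i) else 0.

Lemma card_tilings_begin_with M k L : filling k L ->
  #|[set P : {set {set cell M}} | is_tiling P & begins_with k L P]| = lag T M k.
Proof.
rewrite /lag => fillL; case: ifP => k_le_M.
  rewrite -(card_tilings_with_prefix (slabs_brick fillL k_le_M) (slabs_below fillL)
              (slabs_cover fillL) (slabs_disjoint fillL)).
  by apply: eq_card => P; rewrite !inE begins_with_slabs.
by apply/eqP; rewrite cards_eq0; apply/eqP/setP => P; rewrite !inE /begins_with k_le_M andbF.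
Qed.

(* The five ways to fill the bottom of the box, paired with their depth; the
   last three extrude the domino tilings of the 2 x 3 face. *)
Definition layers : seq (nat * seq placement) :=
  [:: (1, [:: (0, 0, [:: 2; 3; 1])]);
      (2, [:: (0, 0, [:: 1; 3; 2]); (1, 0, [:: 1; 3; 2])]);
      (3, [:: (0, 0, [:: 1; 2; 3]); (0, 2, [:: 2; 1; 3]); (1, 0, [:: 1; 2; 3])]);
      (3, [:: (0, 0, [:: 2; 1; 3]); (0, 1, [:: 1; 2; 3]); (1, 1, [:: 1; 2; 3])]);
      (3, [:: (0, 0, [:: 2; 1; 3]); (0, 1, [:: 2; 1; 3]); (0, 2, [:: 2; 1; 3])])].

Lemma layers_filling : all (fun kL => filling kL.1 kL.2 && (kL.2 != [::])) layers.
Proof. by vm_compute. Qed.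

Fixpoint subseqs (X : Type) (s : seq X) : seq (seq X) :=
  if s is x :: s' then [seq x :: r | r <- subseqs s'] ++ subseqs s' else [:: [::]].

Lemma filter_subseqs (X : eqType) (p : pred X) s : filter p s \in subseqs s.
Proof.
elim: s => [|x s IHs] /=; first by rewrite inE.
have cons_inj : injective (cons x) by move=> r r' [].
by rewrite mem_cat; case: (p x); rewrite ?(mem_map cons_inj) IHs ?orbT.
Qed.

Definition covering (S : seq placement) := all (fun u => has (covers^~ u) S) squares.

(* Placements of [S] that overlap in the face have the same footprint. *)
Definition coherent (S : seq placement) :=
  all (fun u => all (fun v => all (fun t => all (fun t' =>
    [==> covers t u, covers t' u, covers t v => covers t' v]) S) S) squares) squares.

Lemma layer_classification S : S \in subseqs placements -> covering S -> coherent S ->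
  count (fun kL => all (mem S) kL.2) layers = 1.
Proof.
have /allP check : all (fun S => [==> covering S, coherent S =>
  count (fun kL => all (mem S) kL.2) layers == 1]) (subseqs placements).
  by vm_compute.
by move=> /check /implyP h /h /implyP h' /h' /eqP.
Qed.

Section BottomLayer.
Variables (M : nat) (P : {set {set cell M}}).
Hypotheses (M_gt0 : 0 < M) (tiling_P : is_tiling P).

Definition bottom := [seq t <- placements | (depth t <= M) && (slab M t \in P)].

Lemma mem_floor_slab (u : 'I_2 * 'I_3) t : t \in placements ->
  ((u, Ordinal M_gt0) \in slab M t) = covers t (val u.1, val u.2).
Proof.
rewrite mem_placements mem_slab => /and3P [/brick_dims_gt0 /and3P [_ _ d2] _ _].
by rewrite d2 andbT.
Qed.

Lemma bottom_covering : covering bottom.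
Proof.
apply/all_squaresP => u; case/tilingP: tiling_P => brick_P cover_P _.
have [B PB uB] := cover_P (u, Ordinal M_gt0).
case/is_brickP: (brick_P _ PB) => a [b [z [d [fits eB]]]].
move: uB; rewrite eB inE /= => /and3P [ua ub /andP [z_le0 _]].
have z0 : z = 0 by lia.
subst z; case/and4P: (fits) => hd ha hb; rewrite add0n => hz.
apply/hasP; exists (a, b, d); last by rewrite /covers /= ua ub.
by rewrite mem_filter mem_placements /= hd ha hb hz /slab -eB PB.
Qed.

Lemma bottom_coherent : coherent bottom.
Proof.
apply/all_squaresP => u; apply/all_squaresP => v.
apply/allP => t; rewrite mem_filter => /andP [/andP [_ Pt] pl_t].
apply/allP => t'; rewrite mem_filter => /andP [/andP [_ Pt'] pl_t'].
apply/implyP; rewrite -!(mem_floor_slab _ pl_t) -(mem_floor_slab _ pl_t') => ut.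
apply/implyP => ut'; apply/implyP; rewrite -(mem_floor_slab v pl_t').
case/tilingP: tiling_P => _ _ disj_P.
by rewrite (disj_P _ _ _ Pt Pt' ut ut').
Qed.

Lemma begins_withE k L : filling k L -> L != [::] ->
  begins_with k L P = all (mem bottom) L.
Proof.
move=> fillL; case: L fillL => [|t0 L] // fillL _.
have fill_t t : t \in t0 :: L -> (t \in placements) && (depth t == k).
  by case/andP: fillL => /allP fill_t _ /fill_t.
rewrite /begins_with; apply/idP/idP => [/andP [k_le_M P_L]|bot_L].
  apply/allP => t Lt; move/allP/(_ t Lt): P_L => Pt.
  by case/andP: (fill_t t Lt) => pl_t /eqP dt; rewrite inE mem_filter dt k_le_M Pt.
have bot_t t : t \in t0 :: L -> (depth t <= M) && (slab M t \in P).
  by move/allP: bot_L => /[apply]; rewrite inE mem_filter => /andP [].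
have /andP [_ /eqP <-] := fill_t t0 (mem_head _ _).
case/andP: (bot_t t0 (mem_head _ _)) => -> _.
by apply/allP => t /bot_t /andP [].
Qed.

Lemma count_layers_begin : count (fun kL => begins_with kL.1 kL.2 P) layers = 1.
Proof.
rewrite -(layer_classification (filter_subseqs _ _) bottom_covering bottom_coherent).
apply: eq_in_count => kL /(allP layers_filling) /andP [fillL neL].
exact: begins_withE.
Qed.

End BottomLayer.

Lemma T_rec M : 0 < M -> T M = \sum_(kL <- layers) lag T M kL.1.
Proof.
move=> M_gt0; rewrite {1}/T -sum1_card.
transitivity (\sum_(P in [set P : {set {set cell M}} | is_tiling P])
                \sum_(kL <- layers | begins_with kL.1 kL.2 P) 1).
  by apply: eq_bigr => P; rewrite inE => tP; rewrite sum1_count count_layers_begin.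
under eq_bigr do rewrite big_mkcond.
rewrite exchange_big; apply: eq_big_seq => kL /(allP layers_filling) /andP [fillL _].
rewrite -(card_tilings_begin_with M fillL) -big_mkcondr -sum1_card.
by apply: eq_bigl => P; rewrite !inE.
Qed.

Lemma T0 : T 0 = 1.
Proof.
rewrite /T (_ : [set P | is_tiling P] = [set set0]) ?cards1 //.
apply/setP=> P; rewrite !inE; apply/idP/eqP => [|->].
  case/tilingP=> brick_P _ _; apply/setP=> B; rewrite inE; apply/negP=> PB.
  case/is_brickP: (brick_P _ PB) => a [b [z [d [fits _]]]].
  by have [[u [z' z'_lt0]] _] := box_corner fits.
by apply/tilingP; split=> [B|[_ []] //|B B' x]; rewrite inE.
Qed.

Import GRing.Theory.
Local Open Scope ring_scope.

Lemma convolution_denom_lag (f : nat -> nat) N :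
  \sum_(i < N.+1) denom_coef i * (f (N - i)%N)%:Z =
  \sum_(i < 4) denom_coef i * (lag f N i)%:Z.
Proof.
have -> : \sum_(i < N.+1) denom_coef i * (f (N - i)%N)%:Z =
          \sum_(i < N.+1) denom_coef i * (lag f N i)%:Z.
  by apply: eq_bigr => i _; rewrite /lag -ltnS ltn_ord.
pose F i := denom_coef i * (lag f N i)%:Z.
rewrite (big_ord_widen _ F (leq_addr 4 N.+1)) [RHS](big_ord_widen _ F (leq_addl N.+1 4)).
rewrite big_mkcond [RHS]big_mkcond; apply: eq_bigr => i _.
rewrite /F; case: ltnP => iN; case: ltnP => i4 //.
  by rewrite /denom_coef nth_default ?mul0r.
by rewrite /lag leqNgt iN mulr0.
Qed.

Theorem mainTheorem18 :
  forall N : nat,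
    \sum_(i < N.+1) denom_coef i * (T (N - i))%:Z = (N == 0%N)%:R.
Proof.
move=> N; rewrite convolution_denom_lag !big_ord_recr big_ord0 /=.
case: N => [|N]; first by rewrite /lag subn0 T0 /denom_coef /=; lia.
rewrite [lag T _ 0](_ : _ = T N.+1); last by rewrite /lag subn0.
rewrite (T_rec (ltn0Sn N)) /layers !big_cons big_nil /denom_coef /=.
lia.
Qed.
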